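(* Let $\pi,\pi'\in\Pi$, $V\in\mathcal F$, and integers $d\ge1$, $h\ge0$; set $J=T_\pi^hV$ and $B'_\gamma=\gamma A'_1+\gamma^{d+h}A'_{d+h}$. Under the concentrability assumption below, \[ \|T^dV^{\pi}-T_{\pi'}V^{\pi}\|_{1,\rho_1}\;\le\;B'_\gamma\,\|V-V^{\pi}\|_{1,\rho_0}+\|T^dJ-T_{\pi'}V\|_{1,\rho_1}. \]
   Context: Consider a discounted infinite-horizon Markov decision process with (measurable) state space $\mathcal S$, finite action set $\mathcal A$, reward function $r:\mathcal S\times\mathcal A\to[0,R_{\max}]$, transition kernel $p(\cdot\mid s,a)$, and discount factor $\gamma\in[0,1)$. Let $V_{\max}=R_{\max}/(1-\gamma)$ and let $\mathcal F$ be the set of bounded measurable functions $\mathcal S\to[0,V_{\max}]$. Let $\Pi$ be the set of stationary deterministic (measurable) policies $\pi:\mathcal S\to\mathcal A$; $V^\pi(s)=\mathbf E[\sum_{t\ge0}\gamma^t r(s_t,\pi(s_t))]$ with $s_0=s$, $s_{t+1}\sim p(\cdot\mid s_t,\pi(s_t))$. For $V\in\mathcal F$: $(T_\pi V)(s)=r(s,\pi(s))+\gamma\int V(\tilde s)\,p(d\tilde s\mid s,\pi(s))$; $(TV)(s)=\max_{a\in\mathcal A}[r(s,a)+\gamma\int V(\tilde s)\,p(d\tilde s\mid s,a)]$; $T^d$, $T_\pi^h$ denote iterated compositions ($T_\pi^0$ is the identity). For a measure $\nu$ on $\mathcal S$, $(\nu P_\pi)(d\tilde s)=\int p(d\tilde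 s\mid s,\pi(s))\,\nu(ds)$. For a measure $\mu$ and measurable $f$, $\|f\|_{1,\mu}=\int|f|\,d\mu$. Let $\rho_0,\rho_1$ be probability distributions on $\mathcal S$. Concentrability assumption: for every $m\ge1$ and every $\mu_1,\ldots,\mu_m\in\Pi$, the measure $\rho_1P_{\mu_1}\cdots P_{\mu_m}$ is absolutely continuous with respect to $\rho_0$, and $A'_m=\sup_{\mu_1,\ldots,\mu_m\in\Pi}\bigl\|\frac{d\,\rho_1P_{\mu_1}\cdots P_{\mu_m}}{d\rho_0}\bigr\|_\infty<\infty$. *)

From Stdlib Require List.
From HB Require Import structures.
From mathcomp Require Import all_boot all_order all_algebra.
From mathcomp Require Import all_classical all_reals all_analysis measurable_realfun ess_sup_inf.
Set Implicit Arguments. Unset Strict Implicit. Unset Printing Implicit Defensive.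
Import Order.TTheory GRing.Theory Num.Theory.
Import numFieldNormedType.Exports.
Local Open Scope classical_set_scope.
Local Open Scope ring_scope.
Local Open Scope ereal_scope.

(* MDP data: state space S (measurable), finite action set A,
   transition kernel p a s = p(. | s, a) (a probability kernel for each a). *)

Definition is_policy {dS} {S : measurableType dS} {A : finType} (pi : S -> A) : Prop :=
  forall a : A, measurable (pi @^-1` [set a]).

Definition Pop {dS} {S : measurableType dS} {R : realType} {A : finType}
  (p : A -> R.-pker S ~> S) (pi : S -> A) (f : S -> \bar R) : S -> \bar R :=
  fun s => \int[p (pi s) s]_y f y.

Definition Tpi {dS} {S : measurableType dS} {R : realType} {A : finType}
  (r : S -> A -> R) (gamma : R) (p : A -> R.-pker S ~> S) (pi : S -> A)
  (V : S -> \bar R) : S -> \bar R :=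
  fun s => (r s (pi s))%:E + gamma%:E * \int[p (pi s) s]_y V y.

Definition Topt {dS} {S : measurableType dS} {R : realType} {A : finType}
  (r : S -> A -> R) (gamma : R) (p : A -> R.-pker S ~> S)
  (V : S -> \bar R) : S -> \bar R :=
  fun s => \big[maxe/-oo]_(a : A) ((r s a)%:E + gamma%:E * \int[p a s]_y V y).

(* value of policy pi: V^pi(s) = sum_t gamma^t E[r(s_t, pi s_t)] = sum_t gamma^t (P_pi^t r_pi)(s) *)
Definition Vpi {dS} {S : measurableType dS} {R : realType} {A : finType}
  (r : S -> A -> R) (gamma : R) (p : A -> R.-pker S ~> S) (pi : S -> A) : S -> \bar R :=
  fun s => \sum_(0 <= t <oo) ((gamma ^+ t)%:E *
             iter t (Pop p pi) (fun s' => (r s' (pi s'))%:E) s).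

Definition in_F {dS} {S : measurableType dS} {R : realType} (Vmax : R)
  (V : S -> \bar R) : Prop :=
  measurable_fun setT V /\ forall s, 0 <= V s <= Vmax%:E.

Definition norm1 {dS} {S : measurableType dS} {R : realType}
  (mu : {measure set S -> \bar R}) (f : S -> \bar R) : \bar R :=
  \int[mu]_s `| f s |.

(* the measure rho P_{mu_1} ... P_{mu_m}, evaluated on B:
   (rho P_{mu_1} ... P_{mu_m})(B) = rho (P_{mu_1} (... (P_{mu_m} 1_B))) *)
Definition compMeas {dS} {S : measurableType dS} {R : realType} {A : finType}
  (rho : {measure set S -> \bar R}) (p : A -> R.-pker S ~> S) (mus : seq (S -> A))
  (B : set S) : \bar R :=
  \int[rho]_s foldr (fun mu g => Pop p mu g) (fun x => (\1_B x)%:E) mus s.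

Definition is_density {dS} {S : measurableType dS} {R : realType}
  (mu : {measure set S -> \bar R}) (nu : set S -> \bar R) (f : S -> \bar R) : Prop :=
  [/\ measurable_fun setT f, (forall x, 0 <= f x) &
      forall B, measurable B -> nu B = \int[mu]_(x in B) f x].

Definition concA {dS} {S : measurableType dS} {R : realType} {A : finType}
  (rho0 rho1 : {measure set S -> \bar R}) (p : A -> R.-pker S ~> S) (m : nat) : \bar R :=
  ereal_sup [set ess_sup rho0 f | f in
    [set f | exists mus : seq (S -> A), [/\ size mus = m,
         (forall mu, List.In mu mus -> is_policy mu) &
         is_density rho0 (compMeas rho1 p mus) f]]].

Definition concentrability {dS} {S : measurableType dS} {R : realType} {A : finType}
  (rho0 rho1 : {measure set S -> \bar R}) (p : A -> R.-pker S ~> S) : Prop :=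
  forall m : nat, (1 <= m)%N ->
    (forall mus : seq (S -> A), size mus = m ->
       (forall mu, List.In mu mus -> is_policy mu) ->
       exists f, is_density rho0 (compMeas rho1 p mus) f)
    /\ concA rho0 rho1 p m < +oo.

(** Since [V^pi] is the fixed point of [T_pi], the triangle inequality bounds
    [|T^d V^pi - T_pi' V^pi|] by [|T^d J - T^d V^pi| + |T^d J - T_pi' V| + |T_pi' V - T_pi' V^pi|].
    Both Bellman operators are [gamma]-contractions dominated by a policy kernel:
    [|T_mu V - T_mu W| <= gamma P_mu |V - W|], and [|T V - T W| <= gamma P_sigma |V - W|]
    where [sigma] is greedy for [|V - W|].  Iterating, and using [T_pi^h V^pi = V^pi],
    [|T^d J - T^d V^pi| <= gamma^(d+h) P_sigma1 ... P_sigmad P_pi^h |V - V^pi|] and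
    [|T_pi' V - T_pi' V^pi| <= gamma P_pi' |V - V^pi|].  Integrating against [rho1] turns
    each product of kernels into the measure [rho1 P_mu1 ... P_mum], whose density with
    respect to [rho0] is at most [A'_m]; this produces the factors [A'_(d+h)] and [A'_1]. *)

From HB Require Import structures.
From mathcomp Require Import all_boot all_order all_algebra.
From mathcomp Require Import all_classical all_reals all_analysis measurable_realfun ess_sup_inf.
From mathcomp Require Import ring lra.
Set Implicit Arguments.
Unset Strict Implicit.
Unset Printing Implicit Defensive.
Import Order.TTheory GRing.Theory Num.Theory.
Import numFieldNormedType.Exports.
Local Open Scope classical_set_scope.
Local Open Scope ring_scope.
Local Open Scope ereal_scope.

Definition policies {dS} {S : measurableType dS} {A : finType} (mus : seq (S -> A)) :=
  forall mu, List.In mu mus -> is_policy mu.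

Lemma policies_cons {dS} {S : measurableType dS} {A : finType} (mu : S -> A) mus :
  policies (mu :: mus) <-> is_policy mu /\ policies mus.
Proof.
split; first by move=> hm; split=> [|nu hnu]; apply: hm; [left|right].
by case=> hmu hmus nu [<-|/hmus].
Qed.

Lemma policies_cat {dS} {S : measurableType dS} {A : finType} (mus1 mus2 : seq (S -> A)) :
  policies mus1 -> policies mus2 -> policies (mus1 ++ mus2).
Proof. by move=> h1 h2 mu /(List.in_app_or mus1 mus2 mu)[/h1|/h2]. Qed.

Lemma nth_find_eqE (T : eqType) (x0 x : T) (P : pred T) (s : seq T) :
  uniq s -> x \in s -> has P s ->
  (nth x0 s (find P s) == x) = P x && all (fun y => (index y s < index x s)%N ==> ~~ P y) s.
Proof.
move=> us xs hP; have fs : (find P s < size s)%N by rewrite -has_find.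
apply/idP/idP.
  move/eqP <-; apply/andP; split; first exact: nth_find.
  apply/allP => y ys; apply/implyP; rewrite index_uniq // => lt_y.
  by rewrite -(nth_index x0 ys) before_find.
case/andP => Px /allP earlier_notP.
have le_fx : (find P s <= index x s)%N.
  by rewrite leqNgt; apply/negP => /(before_find x0); rewrite nth_index // Px.
have le_xf : (index x s <= find P s)%N.
  rewrite leqNgt; apply/negP => lt_xf.
  have := earlier_notP _ (mem_nth x0 fs).
  by rewrite index_uniq // lt_xf nth_find.
have -> : find P s = index x s by apply/anti_leq; rewrite le_fx le_xf.
by rewrite nth_index.
Qed.

Lemma measurable_all d (T : measurableType d) (I : Type) (l : seq I) (Q : I -> T -> bool) :
  (forall i, measurable [set t | Q i t]) -> measurable [set t | all (Q^~ t) l].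
Proof.
move=> mQ; elim: l => [|i l IH] /=.
  by rewrite (_ : [set _ | true] = setT) //; apply/seteqP; split.
rewrite (_ : [set t | Q i t && all (Q^~ t) l] = [set t | Q i t] `&` [set t | all (Q^~ t) l]).
  exact: measurableI.
by apply/seteqP; split => t /= /andP.
Qed.

Lemma measurable_bigmaxe d (T : measurableType d) (R : realType) (I : Type) (l : seq I)
    (F : I -> T -> \bar R) :
  (forall i, measurable_fun setT (F i)) ->
  measurable_fun setT (fun t => \big[maxe/-oo]_(i <- l) F i t).
Proof.
move=> mF; elim: l => [|i l IH].
  by under eq_fun do rewrite big_nil; exact: measurable_cst.
by under eq_fun do rewrite big_cons; exact: measurable_maxe.
Qed.

Lemma probability_nonempty d (T : measurableType d) (R : realType) (P : probability T R) :
  [set: T] !=set0.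
Proof.
apply/set0P/negP => /eqP T0.
by have := probability_setT P; rewrite T0 measure0 => /esym/eqP; rewrite onee_eq0.
Qed.

Lemma integral_le_ess_sup_density d (T : measurableType d) (R : realType)
    (mu : probability T R) (nu : {measure set T -> \bar R}) f g :
  is_density mu nu f -> ess_sup mu f < +oo -> (forall t, 0 <= g t) -> measurable_fun setT g ->
  \int[nu]_t g t <= ess_sup mu f * \int[mu]_t g t.
Proof.
case=> mf f0 densityE sup_fin g0 mg; set c := ess_sup mu f.
have c0 : 0 <= c.
  apply: ess_sup_gee; last exact: aeW.
  by move: (probability_setT mu) => /= ->; rewrite lte01.
pose k := NngNum (fine_ge0 c0).
have kE : (k%:num)%:E = c by rewrite /= fineK // ge0_fin_numE.
have nu_le B : measurable B -> nu B <= mscale k mu B.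
  move=> mB; rewrite densityE // /mscale kE.
  apply: (@le_trans _ _ (\int[mu]_(x in B) cst c x)); last by rewrite integral_cst.
  apply: ae_ge0_le_integral => //; first exact: measurable_funTS.
  by apply: filterS (ess_sup_ge mu f) => x fx _.
apply: le_trans (ge0_le_measure_integral nu_le measurableT g0 mg) _.
by rewrite ge0_integral_mscale // kE.
Qed.

Section policy_kernel.
Context {dS : measure_display} {S : measurableType dS} {R : realType} {A : finType}.
Variable p : A -> R.-pker S ~> S.
Implicit Types (mu : S -> A) (mus : seq (S -> A)) (f g : S -> \bar R).

Lemma measurable_fun_policy mu (F : A -> S -> \bar R) : is_policy mu ->
  (forall a, measurable_fun setT (F a)) -> measurable_fun setT (fun s => F (mu s) s).
Proof.
move=> hmu mF.
have -> : (fun s => F (mu s) s) =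
    (fun s => \sum_(a <- index_enum A) ((\1_(mu @^-1` [set a]) s)%:E * F a s)).
  apply/funext => s; rewrite (bigD1 (mu s)) //= big1 ?adde0.
    by rewrite indicE mem_set // mul1e.
  move=> a /negbTE mu_s_a; rewrite indicE memNset ?mul0e //= => mu_s.
  by rewrite mu_s eqxx in mu_s_a.
apply: emeasurable_sum => a; apply: emeasurable_funM => //.
by apply/measurable_EFinP; apply: measurable_indic; exact: hmu.
Qed.

Lemma measurable_policy_kernel mu U : is_policy mu -> measurable U ->
  measurable_fun setT (fun s => p (mu s) s U).
Proof.
move=> hmu mU; apply: (measurable_fun_policy (F := fun a s => p a s U)) => // a.
exact: measurable_kernel.
Qed.

Lemma measurable_Pop mu g : is_policy mu -> (forall s, 0 <= g s) ->
  measurable_fun setT g -> measurable_fun setT (Pop p mu g).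
Proof.
move=> hmu g0 mg; apply: (measurable_fun_integral_kernel (l := fun s => p (mu s) s)) => //.
by move=> U mU; exact: measurable_policy_kernel.
Qed.

Lemma Pop_ge0 mu g s : (forall s, 0 <= g s) -> 0 <= Pop p mu g s.
Proof. by move=> g0; apply: integral_ge0. Qed.

Lemma le_Pop mu f g s : (forall s, 0 <= f s) -> measurable_fun setT f ->
  measurable_fun setT g -> (forall s, f s <= g s) -> Pop p mu f s <= Pop p mu g s.
Proof. by move=> f0 mf mg le_fg; apply: ge0_le_integral. Qed.

Lemma Pop_le_cst mu g (c : R) s : (forall s, 0 <= g s <= c%:E) ->
  measurable_fun setT g -> Pop p mu g s <= c%:E.
Proof.
move=> g0c mg; apply: (@le_trans _ _ (\int[p (mu s) s]_y c%:E)).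
  by apply: ge0_le_integral => // y _; case/andP: (g0c y).
by rewrite integral_cst // prob_kernel mule1.
Qed.

Lemma PopZl mu g (c : R) s : (0 <= c)%R -> (forall s, 0 <= g s) ->
  measurable_fun setT g -> Pop p mu (fun y => c%:E * g y) s = c%:E * Pop p mu g s.
Proof. by move=> c0 g0 mg; rewrite /Pop ge0_integralZl_EFin. Qed.

Definition Pchain mus g := foldr (Pop p) g mus.

Lemma Pchain_cat mus1 mus2 g : Pchain (mus1 ++ mus2) g = Pchain mus1 (Pchain mus2 g).
Proof. exact: foldr_cat. Qed.

Lemma Pchain_ge0 mus g s : (forall s, 0 <= g s) -> 0 <= Pchain mus g s.
Proof. by move=> g0; elim: mus s => [|mu mus IH] s; [exact: g0 | exact: Pop_ge0]. Qed.

Lemma measurable_Pchain mus g : policies mus -> (forall s, 0 <= g s) ->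
  measurable_fun setT g -> measurable_fun setT (Pchain mus g).
Proof.
move=> + g0 mg; elim: mus => [|mu mus IH] // /policies_cons[hmu hmus].
by apply: measurable_Pop => // [s|]; [exact: Pchain_ge0 | exact: IH].
Qed.

Lemma le_Pchain mus f g s : policies mus ->
  (forall s, 0 <= f s) -> measurable_fun setT f -> measurable_fun setT g ->
  (forall s, f s <= g s) -> Pchain mus f s <= Pchain mus g s.
Proof.
move=> + f0 mf mg le_fg; elim: mus s => [|mu mus IH] s // /policies_cons[_ hmus].
have g0 s' : 0 <= g s' := le_trans (f0 s') (le_fg s').
apply: le_Pop => [s'|||s']; first exact: Pchain_ge0.
- exact: measurable_Pchain.
- exact: measurable_Pchain.
- exact: IH.
Qed.

Lemma PchainZl mus g (c : R) s : policies mus -> (0 <= c)%R -> (forall s, 0 <= g s) ->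
  measurable_fun setT g -> Pchain mus (fun y => c%:E * g y) s = c%:E * Pchain mus g s.
Proof.
move=> + c0 g0 mg; elim: mus s => [|mu mus IH] s // /policies_cons[_ hmus] /=.
rewrite (_ : Pchain mus _ = fun y => c%:E * Pchain mus g y); last first.
  by apply/funext => y; exact: IH.
by apply: PopZl => // [y|]; [exact: Pchain_ge0 | exact: measurable_Pchain].
Qed.

Section measure_Pop.
Variables (rho : probability S R) (mu : S -> A).

(* The kernel [s |-> p (mu s) s], with a dummy parameter so that the library
   composition [kcomp] of kernels can produce the measure [rho P_mu]; the
   policy hypothesis is an argument so that the instances below can use it. *)
Definition policy_step (hmu : is_policy mu) : unit * S -> {measure set S -> \bar R} :=
  fun ts => p (mu ts.2) ts.2.

Let rho_kernel :=
  kprobability (measurable_cst (rho : pprobability S R) : measurable_fun [set: unit] _).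

Definition measure_Pop (hmu : is_policy mu) : set S -> \bar R :=
  kcomp rho_kernel (policy_step hmu) tt.

Variable hmu : is_policy mu.

Let measurable_policy_step U : measurable U ->
  measurable_fun setT (policy_step hmu ^~ U).
Proof.
move=> mU; apply: (measurableT_comp (f := fun s => p (mu s) s U)) => //.
exact: measurable_policy_kernel.
Qed.

HB.instance Definition _ := isKernel.Build _ _ _ _ R (policy_step hmu) measurable_policy_step.

Let policy_step_setT ts : policy_step hmu ts setT = 1.
Proof. exact: prob_kernel. Qed.

HB.instance Definition _ :=
  Kernel_isProbability.Build _ _ _ _ R (policy_step hmu) policy_step_setT.

HB.instance Definition _ :=
  Measure.copy (measure_Pop hmu) (mkcomp rho_kernel (policy_step hmu) tt).

Let measure_Pop_setT : measure_Pop hmu setT = 1.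
Proof.
rewrite /measure_Pop /kcomp (eq_integral (cst 1)) ?integral_cst //=.
by rewrite /rho_kernel /kprobability probability_setT mul1e.
Qed.

HB.instance Definition _ :=
  Measure_isProbability.Build _ _ R (measure_Pop hmu) measure_Pop_setT.

Lemma integral_measure_Pop g : (forall s, 0 <= g s) -> measurable_fun setT g ->
  \int[measure_Pop hmu]_s g s = \int[rho]_s Pop p mu g s.
Proof. by move=> g0 mg; rewrite integral_kcomp. Qed.

End measure_Pop.

Lemma exists_measure_Pchain (rho : probability S R) mus : policies mus ->
  exists nu : probability S R, forall g, (forall s, 0 <= g s) -> measurable_fun setT g ->
    \int[nu]_s g s = \int[rho]_s Pchain mus g s.
Proof.
elim: mus rho => [|mu mus IH] rho; first by exists rho.
case/policies_cons => hmu hmus; have [nu nuE] := IH (measure_Pop rho hmu) hmus.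
exists nu => g g0 mg; rewrite nuE // integral_measure_Pop // => [s|].
  exact: Pchain_ge0.
exact: measurable_Pchain.
Qed.

Lemma concA_ge0 (rho0 rho1 : probability S R) mus :
  concentrability rho0 rho1 p -> (0 < size mus)%N -> policies mus ->
  0 <= concA rho0 rho1 p (size mus).
Proof.
move=> hconc /hconc[/(_ mus erefl) density_ex _] hmus.
have [f f_density] := density_ex hmus.
apply: (@le_trans _ _ (ess_sup rho0 f)).
  apply: ess_sup_gee; last by apply: aeW; case: f_density.
  by move: (probability_setT rho0) => /= ->; rewrite lte01.
by apply: ereal_sup_ubound; exists f => //; exists mus.
Qed.

Lemma integral_Pchain_le_concA (rho0 rho1 : probability S R) mus g :
  concentrability rho0 rho1 p -> (0 < size mus)%N -> policies mus ->
  (forall s, 0 <= g s) -> measurable_fun setT g ->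
  \int[rho1]_s Pchain mus g s <= concA rho0 rho1 p (size mus) * \int[rho0]_s g s.
Proof.
move=> hconc size_gt0 hmus g0 mg.
have [/(_ mus erefl hmus)[f [mf f0 densityE]] concA_fin] := hconc _ size_gt0.
have [nu nuE] := exists_measure_Pchain rho1 hmus.
have nu_density : is_density rho0 nu f.
  split => // B mB; rewrite -densityE //.
  transitivity (\int[nu]_s (\1_B s)%:E); first by rewrite integral_indic // setIT.
  by rewrite nuE //; apply/measurable_EFinP; exact: measurable_indic.
have sup_le : ess_sup rho0 f <= concA rho0 rho1 p (size mus).
  by apply: ereal_sup_ubound; exists f => //; exists mus; split.
rewrite -nuE //; apply: le_trans
  (integral_le_ess_sup_density nu_density (le_lt_trans sup_le concA_fin) g0 mg) _.
by apply: lee_wpmul2r => //; exact: integral_ge0.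
Qed.

Lemma norm1_le_concA (rho0 rho1 : probability S R) mus (c : R) f g :
  concentrability rho0 rho1 p -> (0 < size mus)%N -> policies mus -> (0 <= c)%R ->
  (forall s, 0 <= g s) -> measurable_fun setT g -> measurable_fun setT (fun s => `|f s|) ->
  (forall s, `|f s| <= c%:E * Pchain mus g s) ->
  norm1 rho1 f <= c%:E * (concA rho0 rho1 p (size mus) * \int[rho0]_s g s).
Proof.
move=> hconc size_gt0 hmus c0 g0 mg mf f_le.
have mPg := measurable_Pchain hmus g0 mg.
apply: (@le_trans _ _ (\int[rho1]_s (c%:E * Pchain mus g s))).
  by apply: ge0_le_integral => //; exact: measurable_funeM.
rewrite ge0_integralZl_EFin // => [|s _]; last exact: Pchain_ge0.
by apply: lee_wpmul2l; [rewrite lee_fin | exact: integral_Pchain_le_concA].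
Qed.

Section greedy.
Variable a0 : A.

Definition is_greedy (h : S -> \bar R) s a :=
  all (fun b => \int[p b s]_y h y <= \int[p a s]_y h y) (index_enum A).

(* Taking the first maximizer in the enumeration of [A] makes the selector measurable. *)
Definition greedy h s := nth a0 (index_enum A) (find (is_greedy h s) (index_enum A)).

Lemma has_greedy h s : has (is_greedy h s) (index_enum A).
Proof.
apply/hasP; case: (arg_maxP (fun a => \int[p a s]_y h y) (isT : predT a0)) => a _ amax.
by exists a; [exact: mem_index_enum | apply/allP => b _; exact: amax].
Qed.

Lemma greedy_ge h s b : \int[p b s]_y h y <= \int[p (greedy h s) s]_y h y.
Proof. by have /allP := nth_find a0 (has_greedy h s); apply; exact: mem_index_enum. Qed.

Lemma greedy_policy h : (forall s, 0 <= h s) -> measurable_fun setT h ->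
  is_policy (greedy h).
Proof.
move=> h0 mh a; set e := index_enum A.
have m_greedy b : measurable [set s | is_greedy h s b].
  apply: measurable_all => c; rewrite -[X in measurable X]setTI.
  by apply: measurable_lee => //; apply: measurable_fun_integral_kernel => // U;
    exact: measurable_kernel.
rewrite (_ : _ @^-1` _ = [set s | is_greedy h s a] `&`
    [set s | all (fun b => (index b e < index a e)%N ==> ~~ is_greedy h s b) e]).
  apply: measurableI => //; apply: measurable_all => b.
  case: ltnP => _ /=; last by rewrite (_ : [set _ | true] = setT) //; apply/seteqP; split.
  rewrite (_ : [set _ | _] = ~` [set s | is_greedy h s b]); first exact: measurableC.
  by apply/seteqP; split => s /negP.
have greedyE s : (greedy h s == a) = is_greedy h s a &&
    all (fun b => (index b e < index a e)%N ==> ~~ is_greedy h s b) e.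
  by rewrite nth_find_eqE ?index_enum_uniq ?mem_index_enum ?has_greedy.
apply/seteqP; split => s /=; first by move/eqP; rewrite greedyE => /andP.
by case=> h1 h2; apply/eqP; rewrite greedyE h1 h2.
Qed.

End greedy.
End policy_kernel.

Section finite_ereal.
Variable R : realType.
Implicit Types x y z w c : \bar R.

Lemma abseBC_fin x y : x \is a fin_num -> y \is a fin_num -> `|x - y| = `|y - x|.
Proof. by case: x => // x _; case: y => // y _; rewrite -!EFinB /= distrC. Qed.

Lemma lee_add_abseB_fin x y : x \is a fin_num -> y \is a fin_num -> x <= y + `|x - y|.
Proof.
case: x => // x _; case: y => // y _; rewrite -!EFinB /= -EFinD lee_fin.
have := ler_norm (x - y); lra.
Qed.

Lemma abseB_le_fin x y c : x \is a fin_num -> y \is a fin_num ->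
  x <= y + c -> y <= x + c -> `|x - y| <= c.
Proof.
case: x => // x _; case: y => // y _; case: c => [c| |] //=; rewrite ?leey //.
rewrite -!EFinD !lee_fin => h1 h2.
by rewrite ler_norml; apply/andP; split; lra.
Qed.

Lemma abseB_triangle3_fin x y z w : x \is a fin_num -> y \is a fin_num ->
  z \is a fin_num -> w \is a fin_num -> `|x - w| <= `|y - x| + `|y - z| + `|z - w|.
Proof.
case: x => // x _; case: y => // y _; case: z => // z _; case: w => // w _.
rewrite -!EFinB /= -!EFinD lee_fin (distrC y x).
have -> : (x - w = (x - y) + (y - z) + (z - w))%R by ring.
have := ler_normD (x - y + (y - z))%R (z - w)%R.
have := ler_normD (x - y)%R (y - z)%R.
lra.
Qed.

End finite_ereal.

Section bellman.
Context {dS : measure_display} {S : measurableType dS} {R : realType} {A : finType}.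
Variables (p : A -> R.-pker S ~> S) (r : S -> A -> R) (Rmax gamma : R).
Hypotheses (measurable_r : forall a, measurable_fun setT (fun s => r s a))
  (r_bound : forall s a, (0 <= r s a <= Rmax)%R)
  (gamma_ge0 : (0 <= gamma)%R) (gamma_lt1 : (gamma < 1)%R) (Rmax_ge0 : (0 <= Rmax)%R).

Let M := (Rmax / (1 - gamma))%R.

Let M_fixed : (Rmax + gamma * M = M)%R.
Proof. by rewrite /M; field; rewrite subr_eq0 gt_eqF. Qed.

Definition qvalue (V : S -> \bar R) a s := (r s a)%:E + gamma%:E * \int[p a s]_y V y.

Definition absdiff (V W : S -> \bar R) s := `|V s - W s|.

Implicit Types (V W : S -> \bar R) (mu : S -> A).

Lemma in_F_ge0 V s : in_F M V -> 0 <= V s.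
Proof. by case=> _ /(_ s)/andP[]. Qed.

Lemma in_F_fin V s : in_F M V -> V s \is a fin_num.
Proof.
by case=> _ /(_ s)/andP[V0 VM]; rewrite ge0_fin_numE // (le_lt_trans VM) ?ltry.
Qed.

Lemma measurable_absdiff V W : in_F M V -> in_F M W -> measurable_fun setT (absdiff V W).
Proof. by case=> mV _ [mW _]; apply: measurableT_comp => //; exact: emeasurable_funB. Qed.

Lemma absdiffC V W : in_F M V -> in_F M W -> absdiff V W = absdiff W V.
Proof. by move=> hV hW; apply/funext => s; rewrite /absdiff abseBC_fin // in_F_fin. Qed.

Lemma measurable_qvalue V a : in_F M V -> measurable_fun setT (qvalue V a).
Proof.
case=> mV /[dup] V0 _; apply: emeasurable_funD; first exact/measurable_EFinP.
apply: measurable_funeM; apply: measurable_fun_integral_kernel => // [U mU|s].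
  exact: measurable_kernel.
by case/andP: (V0 s).
Qed.

Lemma qvalue_in_range V a s : in_F M V -> 0 <= qvalue V a s <= M%:E.
Proof.
move=> hV; have [mV _] := hV; have /andP[r0 rM] := r_bound s a.
apply/andP; split.
  by apply: adde_ge0; rewrite ?lee_fin // mule_ge0 ?lee_fin //; apply: integral_ge0 => y _;
    exact: in_F_ge0.
apply: (@le_trans _ _ (Rmax%:E + gamma%:E * M%:E)); last by rewrite -EFinM -EFinD M_fixed.
apply: leeD; first by rewrite lee_fin.
apply: lee_wpmul2l; first by rewrite lee_fin.
by apply: (Pop_le_cst p (fun=> a)) => // y; case: hV => _ /(_ y).
Qed.

Lemma qvalue_fin V a s : in_F M V -> qvalue V a s \is a fin_num.
Proof.
by move/(qvalue_in_range a s)/andP=> [q0 qM]; rewrite ge0_fin_numE // (le_lt_trans qM) ?ltry.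
Qed.

Lemma qvalue_le V W a s : in_F M V -> in_F M W ->
  qvalue V a s <= qvalue W a s + gamma%:E * \int[p a s]_y absdiff V W y.
Proof.
move=> hV hW; have [mV _] := hV; have [mW _] := hW.
have int_le : \int[p a s]_y V y <= \int[p a s]_y W y + \int[p a s]_y absdiff V W y.
  rewrite -ge0_integralD // => [||y _|]; last exact: measurable_absdiff.
  - apply: ge0_le_integral => // [y _||y _]; first exact: in_F_ge0.
      by apply: emeasurable_funD => //; exact: measurable_absdiff.
    by apply: lee_add_abseB_fin; exact: in_F_fin.
  - by move=> y _; exact: in_F_ge0.
  - exact: abse_ge0.
rewrite /qvalue -addeA leeD2l // -ge0_muleDr; last 2 first.
- by apply: integral_ge0 => y _; exact: in_F_ge0.
- by apply: integral_ge0 => y _; exact: abse_ge0.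
by apply: lee_wpmul2l; rewrite ?lee_fin.
Qed.

Lemma Tpi_in_F mu : is_policy mu -> forall V, in_F M V -> in_F M (Tpi r gamma p mu V).
Proof.
move=> hmu V hV; split => [|s]; last exact: qvalue_in_range.
by apply: (measurable_fun_policy (F := qvalue V)) => // a; exact: measurable_qvalue.
Qed.

Lemma Tpi_absdiff_le mu V W s : in_F M V -> in_F M W ->
  absdiff (Tpi r gamma p mu V) (Tpi r gamma p mu W) s <=
    gamma%:E * Pop p mu (absdiff V W) s.
Proof.
move=> hV hW; apply: abseB_le_fin; rewrite ?qvalue_fin //; first exact: qvalue_le.
by rewrite /Pop (absdiffC hV hW); exact: qvalue_le.
Qed.

Section optimal.
Variable a0 : A.

Lemma Topt_in_F V : in_F M V -> in_F M (Topt r gamma p V).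
Proof.
move=> hV; split => [|s].
  by apply: measurable_bigmaxe => a; exact: measurable_qvalue.
apply/andP; split.
  apply: le_trans (le_bigmax _ (fun a => qvalue V a s) a0).
  by case/andP: (qvalue_in_range a0 s hV).
by apply: bigmax_le => [|a _]; [exact: leNye | case/andP: (qvalue_in_range a s hV)].
Qed.

Lemma Topt_attained V s : exists a, Topt r gamma p V s = qvalue V a s.
Proof.
have [a _ aE] := eq_bigmax (x := -oo) a0 xpredT (fun a => qvalue V a s) isT
  (fun a _ => leNye _).
by exists a; exact: aE.
Qed.

Lemma Topt_absdiff_le V W s : in_F M V -> in_F M W ->
  absdiff (Topt r gamma p V) (Topt r gamma p W) s <=
    gamma%:E * Pop p (greedy p a0 (absdiff V W)) (absdiff V W) s.
Proof.
have Topt_le U U' : in_F M U -> in_F M U' ->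
    Topt r gamma p U s <= Topt r gamma p U' s +
      gamma%:E * Pop p (greedy p a0 (absdiff U U')) (absdiff U U') s.
  move=> hU hU'; have [a ->] := Topt_attained U s.
  apply: le_trans (qvalue_le a s hU hU') _; apply: leeD; first exact: le_bigmax.
  by apply: lee_wpmul2l; [rewrite lee_fin | exact: greedy_ge].
move=> hV hW; apply: abseB_le_fin; [exact/in_F_fin/Topt_in_F.. | exact: Topt_le |].
by rewrite (absdiffC hV hW); exact: Topt_le.
Qed.

End optimal.

Lemma iter_in_F (Op : (S -> \bar R) -> S -> \bar R) n V :
  (forall V, in_F M V -> in_F M (Op V)) -> in_F M V -> in_F M (iter n Op V).
Proof. by move=> hOp hV; elim: n => //= n; exact: hOp. Qed.

Lemma iter_absdiff_le_Pchain (Op : (S -> \bar R) -> S -> \bar R)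
    (sel : (S -> \bar R) -> (S -> \bar R) -> S -> A) n V W :
  (forall V, in_F M V -> in_F M (Op V)) ->
  (forall V W, in_F M V -> in_F M W -> is_policy (sel V W)) ->
  (forall V W s, in_F M V -> in_F M W ->
     absdiff (Op V) (Op W) s <= gamma%:E * Pop p (sel V W) (absdiff V W) s) ->
  in_F M V -> in_F M W ->
  exists mus, [/\ size mus = n, policies mus &
    forall s, absdiff (iter n Op V) (iter n Op W) s <=
      (gamma ^+ n)%:E * Pchain p mus (absdiff V W) s].
Proof.
move=> hOp hsel hcontr hV hW; elim: n => [|n [mus [size_mus hmus mus_le]]].
  by exists [::]; split => // s; rewrite expr0 mul1e.
have hVn := iter_in_F n hOp hV; have hWn := iter_in_F n hOp hW.
have VW0 s : 0 <= absdiff V W s by exact: abse_ge0.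
have mVW := measurable_absdiff hV hW.
exists (sel (iter n Op V) (iter n Op W) :: mus); split => /=; first by rewrite size_mus.
  by apply/policies_cons; split => //; exact: hsel.
have PVW0 y : 0 <= Pchain p mus (absdiff V W) y by exact: Pchain_ge0.
have mPVW := measurable_Pchain p hmus VW0 mVW.
move=> s; apply: le_trans (hcontr _ _ s hVn hWn) _.
rewrite exprS EFinM -muleA; apply: lee_wpmul2l; first by rewrite lee_fin.
rewrite -PopZl ?exprn_ge0 //; apply: le_Pop => // [y||]; first exact: abse_ge0.
- exact: measurable_absdiff.
- exact: measurable_funeM.
Qed.

Section value.
Variables (pi : S -> A) (hpi : is_policy pi).

Let u t := iter t (Pop p pi) (fun s => (r s (pi s))%:E).

Let u_in_range t : (forall s, 0 <= u t s <= Rmax%:E) /\ measurable_fun setT (u t).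
Proof.
elim: t => [|t [u_bnd mu_t]].
  split => [s|]; first by rewrite /u /= !lee_fin.
  by apply: (measurable_fun_policy (F := fun a s => (r s a)%:E)) => // a; exact/measurable_EFinP.
have u0 s : 0 <= u t s by case/andP: (u_bnd s).
split => [s|]; last exact: measurable_Pop.
by apply/andP; split; [exact: Pop_ge0 | exact: Pop_le_cst].
Qed.

Let u_ge0 t s : 0 <= u t s.
Proof. by case: (u_in_range t) => /(_ s)/andP[]. Qed.

Let term_ge0 t s : 0 <= (gamma ^+ t)%:E * u t s.
Proof. by rewrite mule_ge0 ?lee_fin ?exprn_ge0. Qed.

Lemma Vpi_in_F : in_F M (Vpi r gamma p pi).
Proof.
split => [|s].
  apply: ge0_emeasurable_sum => [k s _ _|k _]; first exact: term_ge0.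
  by apply: measurable_funeM; case: (u_in_range k).
apply/andP; split; first by apply: nneseries_ge0 => n _ _; exact: term_ge0.
apply: lime_le; first by apply: is_cvg_nneseries => n _ _; exact: term_ge0.
apply: nearW => n; apply: (@le_trans _ _ (\sum_(0 <= t < n) (Rmax * gamma ^+ t)%:E)).
  apply: lee_sum => t _; rewrite EFinM [X in _ <= X]muleC.
  apply: lee_wpmul2l; first by rewrite lee_fin exprn_ge0.
  by case: (u_in_range t) => /(_ s)/andP[].
rewrite sumEFin lee_fin.
change (series (geometric Rmax gamma) n <= M)%R.
rewrite geometric_seriesE ?lt_eqF //= /M.
apply: ler_wpM2r; first by rewrite invr_ge0 subr_ge0 ltW.
have := mulr_ge0 Rmax_ge0 (exprn_ge0 n gamma_ge0); lra.
Qed.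

(* [V^pi = sum_t gamma^t P_pi^t r_pi]: peel off the term [t = 0]. *)
Lemma Tpi_Vpi : Tpi r gamma p pi (Vpi r gamma p pi) = Vpi r gamma p pi.
Proof.
apply/funext => s; rewrite /Tpi.
have -> : \int[p (pi s) s]_y Vpi r gamma p pi y =
    \sum_(0 <= t <oo) ((gamma ^+ t)%:E * u t.+1 s).
  rewrite /Vpi integral_nneseries //; last 2 first.
  - by move=> n; apply: measurable_funeM; case: (u_in_range n).
  - by move=> n y _; exact: (term_ge0 n y).
  apply: eq_eseriesr => t _; rewrite ge0_integralZl_EFin ?exprn_ge0 // => [y _|].
    exact: u_ge0.
  by case: (u_in_range t).
rewrite -nneseriesZl => [|i _]; last by rewrite mule_ge0 ?lee_fin ?exprn_ge0.
rewrite [RHS]/Vpi [in RHS]nneseries_recl //; last by move=> k _; exact: (term_ge0 k s).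
rewrite -[in RHS](nneseries_addn 1); last by move=> i; exact: (term_ge0 i s).
congr (_ + _); first by rewrite expr0 mul1e.
by apply: eq_eseriesr => t _; rewrite addn1 exprS EFinM -muleA.
Qed.

Lemma iter_Tpi_Vpi n : iter n (Tpi r gamma p pi) (Vpi r gamma p pi) = Vpi r gamma p pi.
Proof. by elim: n => //= n ->; exact: Tpi_Vpi. Qed.

Lemma iter_Topt_iter_Tpi_absdiff_le (a0 : A) d h V : in_F M V ->
  exists mus, [/\ size mus = (d + h)%N, policies mus &
    forall s, absdiff (iter d (Topt r gamma p) (iter h (Tpi r gamma p pi) V))
                      (iter d (Topt r gamma p) (Vpi r gamma p pi)) s <=
      (gamma ^+ (d + h))%:E * Pchain p mus (absdiff V (Vpi r gamma p pi)) s].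
Proof.
move=> hV; set Vp := Vpi r gamma p pi; have hVp : in_F M Vp := Vpi_in_F.
have hJ := iter_in_F h (Tpi_in_F hpi) hV.
have [musT [size_musT hmusT]] := iter_absdiff_le_Pchain (sel := fun _ _ => pi) h
  (Tpi_in_F hpi) (fun _ _ _ _ => hpi) (Tpi_absdiff_le pi) hV hVp.
rewrite iter_Tpi_Vpi => J_le.
have [musO [size_musO hmusO Topt_le]] := iter_absdiff_le_Pchain
  (sel := fun V W => greedy p a0 (absdiff V W)) d (Topt_in_F a0)
  (fun V W hV hW => greedy_policy p a0 (fun _ => abse_ge0 _) (measurable_absdiff hV hW))
  (Topt_absdiff_le a0) hJ hVp.
exists (musO ++ musT); split; first by rewrite size_cat size_musO size_musT.
  exact: policies_cat.
have VVp0 s : 0 <= absdiff V Vp s by exact: abse_ge0.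
have mVVp := measurable_absdiff hV hVp.
have PVVp0 s : 0 <= Pchain p musT (absdiff V Vp) s by exact: Pchain_ge0.
have mPVVp := measurable_Pchain p hmusT VVp0 mVVp.
move=> s; apply: le_trans (Topt_le s) _.
rewrite exprD EFinM -muleA Pchain_cat; apply: lee_wpmul2l; first by rewrite lee_fin exprn_ge0.
rewrite -PchainZl ?exprn_ge0 //; apply: le_Pchain => // [y||]; first exact: abse_ge0.
- exact: measurable_absdiff.
- exact: measurable_funeM.
Qed.

End value.

Lemma norm1_triangle (mu : {measure set S -> \bar R}) X Y Z W :
  in_F M X -> in_F M Y -> in_F M Z -> in_F M W ->
  norm1 mu (fun s => X s - W s) <=
    norm1 mu (fun s => Y s - X s) + norm1 mu (fun s => Y s - Z s) +
    norm1 mu (fun s => Z s - W s).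
Proof.
move=> hX hY hZ hW.
have mYX := measurable_absdiff hY hX; have mYZ := measurable_absdiff hY hZ.
have mZW := measurable_absdiff hZ hW.
apply: (@le_trans _ _ (\int[mu]_s (absdiff Y X s + absdiff Y Z s + absdiff Z W s))).
  apply: ge0_le_integral => //.
  - exact: measurable_absdiff.
  - by apply: emeasurable_funD => //; exact: emeasurable_funD.
  - by move=> s _; apply: abseB_triangle3_fin; exact: in_F_fin.
rewrite !ge0_integralD // => [s _|s _|s _||s _]; rewrite ?adde_ge0 ?abse_ge0 //.
exact: emeasurable_funD.
Qed.

End bellman.

Theorem mainTheorem4 (dS : measure_display) (S : measurableType dS) (R : realType)
  (A : finType) (r : S -> A -> R) (Rmax : R) (p : A -> R.-pker S ~> S) (gamma : R)
  (rho0 rho1 : probability S R) :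
  (forall a, measurable_fun setT (fun s => r s a)) ->
  (forall s a, (0 <= r s a <= Rmax)%R) ->
  (0 <= gamma < 1)%R ->
  concentrability rho0 rho1 p ->
  forall (pi pi' : S -> A) (V : S -> \bar R) (d h : nat),
  is_policy pi -> is_policy pi' -> in_F (Rmax / (1 - gamma)) V -> (1 <= d)%N ->
  let J := iter h (Tpi r gamma p pi) V in
  let B' := gamma%:E * concA rho0 rho1 p 1 + (gamma ^+ (d + h))%:E * concA rho0 rho1 p (d + h) in
  norm1 rho1 (fun s => iter d (Topt r gamma p) (Vpi r gamma p pi) s - Tpi r gamma p pi' (Vpi r gamma p pi) s)
  <= B' * norm1 rho0 (fun s => V s - Vpi r gamma p pi s)
     + norm1 rho1 (fun s => iter d (Topt r gamma p) J s - Tpi r gamma p pi' V s).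
Proof.
move=> mr r_bound /andP[gamma_ge0 gamma_lt1] hconc pi pi' V d h hpi hpi' hV d_gt0 /=.
have [s0 _] := probability_nonempty rho1.
have Rmax_ge0 : (0 <= Rmax)%R by case/andP: (r_bound s0 (pi s0)); exact: le_trans.
set Vp := Vpi r gamma p pi; set J := iter h _ V.
have hVp := Vpi_in_F p mr r_bound gamma_ge0 gamma_lt1 Rmax_ge0 hpi.
have hJ := iter_in_F h (Tpi_in_F p mr r_bound gamma_ge0 gamma_lt1 hpi) hV.
have hTopt := iter_in_F d (Topt_in_F p mr r_bound gamma_ge0 gamma_lt1 (pi s0)).
have hTpi' := Tpi_in_F p mr r_bound gamma_ge0 gamma_lt1 hpi'.
have VVp0 s : 0 <= absdiff V Vp s by exact: abse_ge0.
have mVVp := measurable_absdiff hV hVp.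
have [mus [size_mus hmus Topt_le]] :=
  iter_Topt_iter_Tpi_absdiff_le p mr r_bound gamma_ge0 gamma_lt1 Rmax_ge0 hpi (pi s0) d h hV.
have size_gt0 : (0 < size mus)%N by rewrite size_mus addn_gt0 d_gt0.
have hpi's : policies [:: pi'] by apply/policies_cons; split => // ? [].
have := norm1_le_concA (f := fun s => _ - _) hconc size_gt0 hmus
  (exprn_ge0 (d + h) gamma_ge0) VVp0 mVVp (measurable_absdiff (hTopt _ hJ) (hTopt _ hVp)) Topt_le.
have := norm1_le_concA (f := fun s => _ - _) hconc (isT : 0 < size [:: pi'])%N hpi's gamma_ge0
  VVp0 mVVp (measurable_absdiff (hTpi' _ hV) (hTpi' _ hVp))
  (fun s => Tpi_absdiff_le p r_bound gamma_ge0 gamma_lt1 pi' s hV hVp).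
rewrite size_mus => Tpi'_int Topt_int.
have := concA_ge0 hconc size_gt0 hmus; rewrite size_mus => concA_dh_ge0.
have concA_1_ge0 := concA_ge0 hconc (isT : 0 < size [:: pi'])%N hpi's.
apply: le_trans (norm1_triangle rho1 (hTopt _ hVp) (hTopt _ hJ) (hTpi' _ hV) (hTpi' _ hVp)) _.
rewrite ge0_muleDl ?mule_ge0 ?lee_fin ?exprn_ge0 //.
apply: le_trans (leeD (leeD Topt_int (lexx _)) Tpi'_int) _.
by rewrite !muleA addeC addeA.
Qed.
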